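(* Let $0\to N\xrightarrow{i} G\to Q\to 1$ be a short exact sequence of groups with $N$ abelian (written additively), and let $Z^1(G,N)$ be the abelian group of crossed homomorphisms $\phi:G\to N$ (i.e. $\phi(x+y)=\phi(x)+x\cdot\phi(y)$). For $\phi,\psi\in Z^1(G,N)$ define $(\phi\diamond\psi)(x):=\phi(i(\psi(x)))$. Then $\phi\diamond\psi\in Z^1(G,N)$.
   Context: $G$ acts on $N$ by conjugation, $x\cdot n=x+n-x$. $Z^1(G,N)$ is an abelian group under pointwise addition. *)

From HB Require Import structures.
From mathcomp Require Import all_boot all_algebra.
From mathcomp Require Import monoid.
Set Implicit Arguments. Unset Strict Implicit. Unset Printing Implicit Defensive.

(* G, Q : (possibly infinite, nonabelian) groups, written multiplicatively
   (mathcomp's [groupType]); N : abelian group written additively ([zmodType]). *)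

Definition short_exact (N : zmodType) (G Q : groupType)
    (i : N -> G) (p : G -> Q) : Prop :=
  [/\ (forall a b : N, i (a + b)%R = (i a * i b)%g),
      (forall x y : G, p (x * y)%g = (p x * p y)%g),
      injective i,
      (forall q : Q, exists x : G, p x = q)
    & (forall x : G, p x = 1%g <-> exists n : N, i n = x)].

Definition is_conj_action (N : zmodType) (G : groupType)
    (i : N -> G) (act : G -> N -> N) : Prop :=
  forall (x : G) (n : N), i (act x n) = (x * i n * x^-1)%g.

Definition crossed_hom (N : zmodType) (G : groupType)
    (act : G -> N -> N) (phi : G -> N) : Prop :=
  forall x y : G, phi (x * y)%g = (phi x + act x (phi y))%R.

Definition diamond (N : zmodType) (G : groupType) (i : N -> G)
    (phi psi : G -> N) : G -> N :=
  fun x => phi (i (psi x)).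

From HB Require Import structures.
From mathcomp Require Import all_boot all_algebra.
From mathcomp Require Import monoid.
Set Implicit Arguments. Unset Strict Implicit. Unset Printing Implicit Defensive.
Import GRing.Theory.

(* Since N is abelian, elements of i(N) act trivially on N, so every crossed
   homomorphism phi satisfies phi (x (i n) x^-1) = x . phi (i n).  Hence
   phi o i o psi turns the cocycle identity of psi, read in G as
   i (psi (x y)) = i (psi x) * x (i (psi y)) x^-1, into its own. *)

Section ConjugationAction.

Variables (N : zmodType) (G : groupType) (i : N -> G) (act : G -> N -> N).
Hypotheses (iD : forall a b : N, i (a + b)%R = (i a * i b)%g)
           (i_inj : injective i)
           (actE : is_conj_action i act).

Lemma conj_act1 (n : N) : act 1%g n = n.
Proof. by apply: i_inj; rewrite actE invg1 mulg1 mul1g. Qed.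

Lemma conj_actD (x : G) (a b : N) :
  act x (a + b)%R = (act x a + act x b)%R.
Proof.
apply: i_inj; rewrite iD !actE iD !mulgA; congr (_ * _)%g.
by rewrite -(mulgA _ x^-1%g) mulVg mulg1.
Qed.

Lemma conj_act_inner (n m : N) : act (i n) m = m.
Proof. by apply: i_inj; rewrite actE -iD addrC iD mulgK. Qed.

Variable phi : G -> N.
Hypothesis phiM : crossed_hom act phi.

Lemma crossed_hom1 : phi 1%g = 0%R.
Proof.
apply: (addrI (phi 1%g)); rewrite addr0.
by rewrite -[X in (_ + X)%R](conj_act1 (phi 1%g)) -phiM mulg1.
Qed.

Lemma crossed_homV (x : G) : (phi x + act x (phi x^-1%g))%R = 0%R.
Proof. by rewrite -phiM mulgV crossed_hom1. Qed.

Lemma crossed_hom_conj_inner (x : G) (n : N) :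
  phi (x * i n * x^-1)%g = act x (phi (i n)).
Proof.
rewrite -mulgA !phiM conj_act_inner conj_actD addrA.
by rewrite addrAC crossed_homV add0r.
Qed.

End ConjugationAction.

Theorem lemma6 (N : zmodType) (G Q : groupType) (i : N -> G) (p : G -> Q)
    (act : G -> N -> N) (phi psi : G -> N) :
  short_exact i p ->
  is_conj_action i act ->
  crossed_hom act phi ->
  crossed_hom act psi ->
  crossed_hom act (diamond i phi psi).
Proof.
move=> [iD _ i_inj _ _] actE phiM psiM x y; rewrite /diamond.
rewrite psiM iD actE phiM (conj_act_inner iD i_inj actE).
by rewrite (crossed_hom_conj_inner iD i_inj actE phiM).
Qed.
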